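(* Let $L\subset\mathbb{Z}^m$ be a non-zero lattice with $L\cap\mathbb{N}^m=\{\mathbf 0\}$ and $\mathrm{Sat}(L)=\ker_{\mathbb{Z}}(\mathcal{A})$. If $E\in\mathcal{T}_{\min}$, then (1) there is no circuit $\mathbf x^{\mathbf u_+}-\mathbf x^{\mathbf u_-}\in I_{\mathcal{A}}$ with $\mathrm{supp}(\mathbf x^{\mathbf u_+})\subsetneq E$ or $\mathrm{supp}(\mathbf x^{\mathbf u_-})\subsetneq E$; and (2) there exists a circuit $\mathbf x^{\mathbf u_+}-\mathbf x^{\mathbf u_-}\in I_{\mathcal{A}}$ with $\mathrm{supp}(\mathbf x^{\mathbf u_+})=E$ or $\mathrm{supp}(\mathbf x^{\mathbf u_-})=E$.
   Context: $K$ is a field, $\mathbf x^{\mathbf u}=x_1^{u_1}\cdots x_m^{u_m}$, and $\mathbf u_\pm$ are the positive/negative parts of $\mathbf u\in\mathbb{Z}^m$. $I_L=(\mathbf x^{\mathbf u_+}-\mathbf x^{\mathbf u_-}:\mathbf u\in L)\subset K[x_1,\ldots,x_m]$; $\mathrm{Sat}(L)=\{\mathbf u: d\mathbf u\in L\text{ for some nonzero } d\in\mathbb{Z}\}$; $\mathcal{A}=\{\mathbf a_1,\ldots,\mathbf a_m\}\subset\mathbb{Z}^n$, $\ker_{\mathbb{Z}}(\mathcal{A})=\{\mathbf q\in\mathbb{Z}^m:\sum q_i\mathbf a_i=0\}$, and $I_{\mathcal{A}}=I_{\ker_{\mathbb{Z}}(\mathcal{A})}$. A circuit is a nonzero $\mathbf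 u\in\ker_{\mathbb{Z}}(\mathcal{A})$ whose support $\mathrm{supp}(\mathbf u)=\{i:u_i\ne0\}$ is inclusion-minimal among nonzero vectors of $\ker_{\mathbb{Z}}(\mathcal{A})$ and whose coordinates are relatively prime; the binomial $\mathbf x^{\mathbf u_+}-\mathbf x^{\mathbf u_-}$ is then also called a circuit. $\mathrm{supp}(\mathbf x^{\mathbf w})=\mathrm{supp}(\mathbf w)$. A monomial $M$ is indispensable of $I_L$ if every system of binomial generators of $I_L$ contains a binomial having $M$ as a monomial. $\mathcal{T}_{\min}$ is the set of inclusion-minimal elements of the set of supports of indispensable monomials of $I_L$. *)

From mathcomp Require Import all_boot all_order all_algebra.
From mathcomp Require Import mpoly.
Set Implicit Arguments. Unset Strict Implicit. Unset Printing Implicit Defensive.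
Import Order.TTheory GRing.Theory Num.Theory.
Local Open Scope ring_scope.

Definition is_lattice (m : nat) (L : 'rV[int]_m -> Prop) : Prop :=
  L 0 /\ (forall u v, L u -> L v -> L (u - v)).

Definition Sat (m : nat) (L : 'rV[int]_m -> Prop) (u : 'rV[int]_m) : Prop :=
  exists d : int, d != 0 /\ L (d *: u).

(* ker_Z(A), where A = {a_1,...,a_m} subset Z^n is given as the m x n integer
   matrix whose i-th row is a_i; sum_i u_i a_i = u *m A. *)
Definition kerZ (m n : nat) (A : 'M[int]_(m, n)) (u : 'rV[int]_m) : Prop :=
  u *m A = 0.

Definition posp (z : int) : nat := if 0 <= z then absz z else 0%N.
Definition negp (z : int) : nat := if z < 0 then absz z else 0%N.
Definition upos (m : nat) (u : 'rV[int]_m) : 'X_{1..m} := [multinom posp (u ord0 i) | i < m].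
Definition uneg (m : nat) (u : 'rV[int]_m) : 'X_{1..m} := [multinom negp (u ord0 i) | i < m].

Definition binom (K : fieldType) (m : nat) (a b : 'X_{1..m}) : {mpoly K[m]} :=
  'X_[a] - 'X_[b].

Definition in_ideal (K : fieldType) (m : nat) (G : {mpoly K[m]} -> Prop)
  (f : {mpoly K[m]}) : Prop :=
  exists s : seq ({mpoly K[m]} * {mpoly K[m]}),
    (forall p, p \in s -> G p.2) /\ f = \sum_(p <- s) p.1 * p.2.

Definition IL_gens (K : fieldType) (m : nat) (L : 'rV[int]_m -> Prop)
  (f : {mpoly K[m]}) : Prop :=
  exists u, L u /\ f = @binom K m (upos u) (uneg u).

Definition IL (K : fieldType) (m : nat) (L : 'rV[int]_m -> Prop) (f : {mpoly K[m]}) : Prop :=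
  in_ideal (@IL_gens K m L) f.

Definition binomial_generating_system (K : fieldType) (m : nat)
  (L : 'rV[int]_m -> Prop) (S : ('X_{1..m} * 'X_{1..m}) -> Prop) : Prop :=
  (forall p, S p -> p.1 != p.2) /\
  (forall f, in_ideal (fun g => exists p, S p /\ g = @binom K m p.1 p.2) f <-> @IL K m L f).

Definition indispensable_monomial (K : fieldType) (m : nat)
  (L : 'rV[int]_m -> Prop) (w : 'X_{1..m}) : Prop :=
  forall S, @binomial_generating_system K m L S ->
    exists p, S p /\ (p.1 = w \/ p.2 = w).

Definition mnmsupp (m : nat) (w : 'X_{1..m}) : {set 'I_m} := [set i | w i != 0%N].

Definition indisp_supports (K : fieldType) (m : nat) (L : 'rV[int]_m -> Prop)
  (E : {set 'I_m}) : Prop :=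
  exists w, @indispensable_monomial K m L w /\ mnmsupp w = E.

Definition Tmin (K : fieldType) (m : nat) (L : 'rV[int]_m -> Prop) (E : {set 'I_m}) : Prop :=
  @indisp_supports K m L E /\
  (forall F, @indisp_supports K m L F -> F \subset E -> F = E).

Definition vsupp (m : nat) (u : 'rV[int]_m) : {set 'I_m} := [set i | u ord0 i != 0].

Definition circuit (m n : nat) (A : 'M[int]_(m, n)) (u : 'rV[int]_m) : Prop :=
  [/\ kerZ A u, u != 0,
      (forall v, kerZ A v -> v != 0 -> vsupp v \subset vsupp u -> vsupp v = vsupp u)
    & (forall d : int, (forall i, (d %| u ord0 i)%Z) -> `|d| = 1)].

From mathcomp Require Import all_boot all_order all_algebra.
From mathcomp Require Import mpoly.
From mathcomp Require Import zify.
From Stdlib Require Import Classical.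
Import Order.TTheory GRing.Theory Num.Theory.
Set Implicit Arguments. Unset Strict Implicit. Unset Printing Implicit Defensive.
Local Open Scope ring_scope.

(* Two facts about a lattice L with Sat(L) = ker(A) carry the argument.
   (a) If v in L is nonzero and x^{v_+} is minimal for divisibility among the
   x^{u_+}, u in L \ 0, then x^{v_+} is indispensable: any generating system
   must produce the binomial x^{v_+} - x^{v_-}, so some generator has a
   monomial dividing x^{v_+}, and that monomial is again some x^{u_+}.
   (b) Every nonzero u in ker(A) has a conformal circuit: while some kernel
   vector has strictly smaller support, a suitable combination with it kills
   a coordinate and stays conformal; finally divide by the gcd.
   For (1), a circuit u with supp(u_+) strictly inside E has a multiple in L,
   below which sits a minimal x^{v_+} of even smaller support, contradicting
   the minimality of E.  For (2), write an indispensable monomial with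
   support E as x^{v_+}, v in L; a circuit conformal to v has its positive
   support inside E, hence equal to E by (1). *)

Lemma exists_minimal_below (T : Type) (P : T -> Prop) (lt : T -> T -> Prop)
    (f : T -> nat) x :
  (forall x y z, lt x y -> lt y z -> lt x z) ->
  (forall x y, lt x y -> (f x < f y)%N) ->
  P x -> exists2 y, P y /\ (y = x \/ lt y x) & forall z, P z -> ~ lt z y.
Proof.
move=> lt_trans lt_f; have [N] := ubnP (f x); elim: N x => // N IH x fx Px.
case: (classic (exists z, P z /\ lt z x)) => [[z [Pz lt_zx]]|no_lower].
  have [|y [Py [->|lt_yz]] ymin] := IH z _ Pz.
  - exact: leq_trans (lt_f _ _ lt_zx) fx.
  - by exists z; [split; [|right] | ].
  - by exists y; [split; [|right; apply: lt_trans lt_zx] | ].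
by exists x => [|z Pz lt_zx]; [split; [|left] | apply: no_lower; exists z].
Qed.

Lemma posp_gt0 (z : int) : (0 < posp z)%N = (0 < z).
Proof. rewrite /posp; case: ifP; lia. Qed.

Lemma pospN (z : int) : posp (- z) = negp z.
Proof. rewrite /posp /negp; case: ifP; case: ifP; lia. Qed.

Lemma posp_eq_negp (z : int) : posp z = negp z -> z = 0.
Proof. rewrite /posp /negp; case: ifP; case: ifP; lia. Qed.

Lemma uposE m (u : 'rV[int]_m) i : upos u i = posp (u ord0 i).
Proof. by rewrite /upos mnmE. Qed.

Lemma unegE m (u : 'rV[int]_m) i : uneg u i = negp (u ord0 i).
Proof. by rewrite /uneg mnmE. Qed.

Lemma uposN m (u : 'rV[int]_m) : upos (- u) = uneg u.
Proof. by apply/mnmP => i; rewrite uposE unegE mxE pospN. Qed.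

Lemma upos_eq_uneg m (u : 'rV[int]_m) : (upos u == uneg u) = (u == 0).
Proof.
apply/eqP/eqP => [e|->]; last by apply/mnmP => i; rewrite uposE unegE mxE.
by apply/matrixP => i j; rewrite !ord1 mxE; apply: posp_eq_negp; rewrite -uposE -unegE e.
Qed.

Lemma mnmsupp_upos m (u : 'rV[int]_m) : mnmsupp (upos u) = [set i | 0 < u ord0 i].
Proof. by apply/setP => i; rewrite !inE uposE -lt0n posp_gt0. Qed.

Lemma mnmsupp_lem m (a b : 'X_{1..m}) : (a <= b)%MM -> mnmsupp a \subset mnmsupp b.
Proof.
move/mnm_lepP=> le_ab; apply/subsetP => i; rewrite !inE -!lt0n => a_i.
exact: leq_trans a_i (le_ab i).
Qed.

Lemma lem_anti m (a b : 'X_{1..m}) : (a <= b)%MM -> (b <= a)%MM -> a = b.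
Proof.
move=> /mnm_lepP le_ab /mnm_lepP le_ba.
by apply/mnmP => i; apply/eqP; rewrite eqn_leq le_ab le_ba.
Qed.

Lemma lem_ltm_trans m (a b c : 'X_{1..m}) : (a <= b)%MM -> (b < c)%MM -> (a < c)%MM.
Proof.
move=> le_ab /andP [ne_bc le_bc]; rewrite /ltm (lepm_trans le_ab le_bc) andbT.
by apply: contra ne_bc => /eqP ac; rewrite -ac in le_bc *; rewrite (lem_anti le_bc le_ab).
Qed.

Lemma mdeg_ltm m (a b : 'X_{1..m}) : (a < b)%MM -> (mdeg a < mdeg b)%N.
Proof.
case/andP=> ne_ab le_ab; rewrite -(submK le_ab) mdegD -[X in (X < _)%N]add0n.
rewrite ltn_add2r lt0n mdeg_eq0; apply: contra ne_ab => /eqP ba0.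
by rewrite -(submK le_ab) ba0 add0m.
Qed.

Lemma mcoeff_mulX_neq0 (K : fieldType) m (q : {mpoly K[m]}) a x :
  (q * 'X_[a])@_x != 0 -> (a <= x)%MM.
Proof.
rewrite -mcoeff_msupp (perm_mem (msuppMX q a)) => /mapP [y _ ->].
exact: lem_addr.
Qed.

Lemma mcoeff_binom_neq0 (K : fieldType) m (a b x : 'X_{1..m}) :
  a != b -> x = a \/ x = b -> (@binom K m a b)@_x != 0.
Proof.
move=> ne_ab [->|->]; rewrite /binom mcoeffB !mcoeffX eqxx.
  by rewrite [b == a]eq_sym (negbTE ne_ab) subr0 oner_eq0.
by rewrite (negbTE ne_ab) sub0r oppr_eq0 oner_eq0.
Qed.

Lemma in_ideal_gen (K : fieldType) m (G : {mpoly K[m]} -> Prop) g :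
  G g -> in_ideal G g.
Proof. by exists [:: (1, g)]; rewrite big_seq1 mul1r; split=> // p /[!inE] /eqP ->. Qed.

Lemma in_ideal_binom_mcoeff (K : fieldType) m (G : {mpoly K[m]} -> Prop)
    (P : 'X_{1..m} -> 'X_{1..m} -> Prop) f x :
  (forall g, G g -> exists a b, P a b /\ g = @binom K m a b) ->
  in_ideal G f -> f@_x != 0 ->
  exists a b, [/\ P a b, a != b & (a <= x)%MM \/ (b <= x)%MM].
Proof.
move=> G_binom [s [sG ->]] {f}; elim: s sG => [|p s IH] sG.
  by rewrite big_nil mcoeff0 eqxx.
rewrite big_cons mcoeffD; have [p0|p_neq0 _] := eqVneq (p.1 * p.2)@_x 0.
  by rewrite p0 add0r; apply: IH => q q_s; apply: sG; rewrite inE q_s orbT.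
have [a [b [Pab p2E]]] := G_binom _ (sG p (mem_head _ _)).
exists a, b; move: p_neq0; rewrite p2E /binom mulrBr mcoeffB.
have [->|ne_ab] := eqVneq a b; first by rewrite subrr eqxx.
have [a0|/mcoeff_mulX_neq0 le_ax _] := eqVneq (p.1 * 'X_[a])@_x 0; last by split=> //; left.
by rewrite a0 sub0r oppr_eq0 => /mcoeff_mulX_neq0 le_bx; split=> //; right.
Qed.

Section LatticeBinomials.

Variables (K : fieldType) (m : nat) (L : 'rV[int]_m -> Prop).
Hypothesis L_lattice : is_lattice L.

Lemma latticeN u : L u -> L (- u).
Proof. by case: L_lattice => L0 LB Lu; rewrite -sub0r; apply: LB. Qed.

Lemma Sat_pos_multiple u : Sat L u -> exists2 k : int, 0 < k & L (k *: u).
Proof.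
case=> d [d_neq0 Ldu]; have [d_gt0|d_le0] := ltP 0 d; first by exists d.
exists (- d); first by rewrite oppr_gt0 lt_neqAle d_neq0 d_le0.
by rewrite scaleNr; apply: latticeN.
Qed.

Definition lattice_binomials (p : 'X_{1..m} * 'X_{1..m}) : Prop :=
  exists2 u, L u /\ u != 0 & p = (upos u, uneg u).

Lemma binom_upos_uneg_IL u : L u -> @IL K m L (binom K (upos u) (uneg u)).
Proof. by move=> Lu; apply: in_ideal_gen; exists u. Qed.

Lemma lattice_binomials_generate : @binomial_generating_system K m L lattice_binomials.
Proof.
split=> [p [u [_ u_neq0] ->]|f]; first by rewrite upos_eq_uneg.
split=> [[s [sG ->]]|[s [sG ->]]].
  by exists s; split=> // p /sG [q [[u [Lu _] ->] ->]]; exists u.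
exists [seq p <- s | p.2 != 0]; split.
  move=> p; rewrite mem_filter => /andP [p2_neq0 /sG [u [Lu p2E]]].
  exists (upos u, uneg u); split=> //; exists u => //; split=> //.
  apply: contraNneq p2_neq0 => /eqP; rewrite -upos_eq_uneg p2E /binom => /eqP ->.
  by rewrite subrr.
rewrite big_filter [RHS]big_mkcond; apply: eq_bigr => p _.
by case: ifP => // /negbFE/eqP ->; rewrite mulr0.
Qed.

Lemma lattice_uneg_upos u : L u -> u != 0 -> exists2 v, L v /\ v != 0 & upos v = uneg u.
Proof.
by move=> Lu u_neq0; exists (- u); rewrite ?uposN // oppr_eq0; split=> //; apply: latticeN.
Qed.

Lemma indispensable_upos w :
  @indispensable_monomial K m L w -> exists2 v, L v /\ v != 0 & upos v = w.
Proof.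
case/(_ _ lattice_binomials_generate) => p [[u [Lu u_neq0] ->] /= [<-|<-]].
  by exists u.
exact: lattice_uneg_upos.
Qed.

Lemma IL_binom_lower_upos a b x :
  a != b -> @IL K m L (binom K a b) -> x = a \/ x = b ->
  exists2 v, L v /\ v != 0 & (upos v <= x)%MM.
Proof.
move=> ne_ab ILab x_ab.
have [|a' [b' [[u [Lu [-> ->]]] ne_ab' [le|le]]]] :=
  in_ideal_binom_mcoeff (P := fun a b => exists u, L u /\ a = upos u /\ b = uneg u)
    _ ILab (mcoeff_binom_neq0 K ne_ab x_ab).
- by move=> g [u [Lu ->]]; exists (upos u), (uneg u); split=> //; exists u.
- by exists u; rewrite // -upos_eq_uneg.
have [|v Lv vu] := lattice_uneg_upos Lu; first by rewrite -upos_eq_uneg.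
by exists v; rewrite ?vu.
Qed.

Definition minimal_upos (v : 'rV[int]_m) : Prop :=
  [/\ L v, v != 0 & forall u, L u -> u != 0 -> ~ (upos u < upos v)%MM].

Lemma exists_minimal_upos u : L u -> u != 0 ->
  exists2 v, minimal_upos v & (upos v <= upos u)%MM.
Proof.
move=> Lu u_neq0.
have lt_trans (a b c : 'rV[int]_m) :
    (upos a < upos b)%MM -> (upos b < upos c)%MM -> (upos a < upos c)%MM.
  by case/andP=> _; apply: lem_ltm_trans.
have lt_mdeg (a b : 'rV[int]_m) : (upos a < upos b)%MM -> (mdeg (upos a) < mdeg (upos b))%N.
  exact: mdeg_ltm.
have [v [[Lv v_neq0] vu] vmin] :=
  exists_minimal_below (P := fun v => L v /\ v != 0) lt_trans lt_mdeg (conj Lu u_neq0).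
exists v; first by split=> // w Lw w_neq0; apply: vmin.
by case: vu => [->|/andP [] //]; apply: lepm_refl.
Qed.

Lemma minimal_upos_below v x :
  minimal_upos v -> (x <= upos v)%MM ->
  (exists2 u, L u /\ u != 0 & (upos u <= x)%MM) -> x = upos v.
Proof.
case=> _ _ vmin le_xv [u [Lu u_neq0] le_ux]; apply/eqP; apply: contraT => ne_xv.
by case: (vmin u Lu u_neq0); apply: lem_ltm_trans le_ux _; rewrite /ltm ne_xv.
Qed.

Lemma minimal_upos_indispensable v :
  minimal_upos v -> @indispensable_monomial K m L (upos v).
Proof.
move=> vmin S [_ S_IL]; have [Lv v_neq0 _] := vmin.
have S_binom : forall g, (exists p, S p /\ g = binom K p.1 p.2) ->
    exists a b, S (a, b) /\ g = binom K a b.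
  by move=> g [[a b] [Sab ->]]; exists a, b.
have v_coef : (binom K (upos v) (uneg v))@_(upos v) != 0.
  by apply: mcoeff_binom_neq0; [rewrite upos_eq_uneg | left].
have [a [b [Sab ne_ab le_ab]]] :=
  in_ideal_binom_mcoeff S_binom ((S_IL _).2 (binom_upos_uneg_IL Lv)) v_coef.
have ILab : IL L (binom K a b) by apply/S_IL/in_ideal_gen; exists (a, b).
exists (a, b); split=> //=.
by case: le_ab => le; [left | right]; apply: minimal_upos_below vmin le _;
  apply: (IL_binom_lower_upos ne_ab ILab); [left | right].
Qed.

End LatticeBinomials.

Definition conformal m (c v : 'rV[int]_m) : Prop := forall i,
  (0 < c ord0 i -> 0 < v ord0 i) /\ (c ord0 i < 0 -> v ord0 i < 0).

Lemma conformal_refl m (c : 'rV[int]_m) : conformal c c.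
Proof. by []. Qed.

Lemma conformal_trans m (a b c : 'rV[int]_m) : conformal a b -> conformal b c -> conformal a c.
Proof.
move=> ab bc i; have [ab_pos ab_neg] := ab i; have [bc_pos bc_neg] := bc i.
by split=> ?; [apply/bc_pos/ab_pos | apply/bc_neg/ab_neg].
Qed.

Lemma conformalZl m (k : int) (c : 'rV[int]_m) : 0 < k -> conformal (k *: c) c.
Proof. by move=> k_gt0 i; rewrite mxE pmulr_rgt0 // pmulr_rlt0. Qed.

Lemma conformalZr m (k : int) (c : 'rV[int]_m) : 0 < k -> conformal c (k *: c).
Proof. by move=> k_gt0 i; rewrite mxE pmulr_rgt0 // pmulr_rlt0. Qed.

Lemma conformal_vsupp m (c v : 'rV[int]_m) : conformal c v -> vsupp c \subset vsupp v.
Proof. by move=> cv; apply/subsetP => i; rewrite !inE; have := cv i; lia. Qed.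

Lemma conformal_mnmsupp_upos m (c v : 'rV[int]_m) :
  conformal c v -> mnmsupp (upos c) \subset mnmsupp (upos v).
Proof.
by move=> cv; rewrite !mnmsupp_upos; apply/subsetP => i; rewrite !inE; case: (cv i).
Qed.

Lemma vsuppN m (c : 'rV[int]_m) : vsupp (- c) = vsupp c.
Proof. by apply/setP => i; rewrite !inE mxE oppr_eq0. Qed.

Lemma vsuppZ m (k : int) (c : 'rV[int]_m) : k != 0 -> vsupp (k *: c) = vsupp c.
Proof. by move=> k_neq0; apply/setP => i; rewrite !inE mxE mulf_eq0 (negbTE k_neq0). Qed.

Lemma kerZN m n (A : 'M[int]_(m, n)) c : kerZ A c -> kerZ A (- c).
Proof. by rewrite /kerZ mulNmx => ->; rewrite oppr0. Qed.

Lemma kerZ_lincomb m n (A : 'M[int]_(m, n)) c c' (a b : int) :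
  kerZ A c -> kerZ A c' -> kerZ A (a *: c - b *: c').
Proof. by rewrite /kerZ => Ac Ac'; rewrite mulmxBl -!scalemxAl Ac Ac' !scaler0 subr0. Qed.

Lemma kerZZ m n (A : 'M[int]_(m, n)) (k : int) c : k != 0 -> kerZ A (k *: c) -> kerZ A c.
Proof.
rewrite /kerZ -scalemxAl => k_neq0 /matrixP Akc; apply/matrixP => i j.
by have /eqP := Akc i j; rewrite !mxE mulf_eq0 (negbTE k_neq0) => /eqP.
Qed.

Section ConformalElimination.

Variables (m : nat) (c c' : 'rV[int]_m) (j : 'I_m).

Definition conformal_elim : 'rV[int]_m := `|c' ord0 j| *: c - `|c ord0 j| *: c'.

Lemma conformal_elimE i :
  conformal_elim ord0 i = `|c' ord0 j| * c ord0 i - `|c ord0 j| * c' ord0 i.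
Proof. by rewrite !mxE. Qed.

Hypothesis c'c_j : 0 < c' ord0 j * c ord0 j.

Lemma conformal_elim_j : conformal_elim ord0 j = 0.
Proof. by rewrite conformal_elimE; move: c'c_j; nia. Qed.

Lemma conformal_elim_neq0 : vsupp c' \proper vsupp c -> conformal_elim != 0.
Proof.
case/properP=> _ [k]; rewrite !inE => c_k /negPn/eqP c'_k.
apply/eqP => /matrixP /(_ ord0 k) /eqP; rewrite conformal_elimE c'_k mulr0 subr0 mxE.
by rewrite mulf_eq0 (negbTE c_k) orbF normr_eq0; apply/negP; move: c'c_j; nia.
Qed.

Hypothesis supp_c' : vsupp c' \subset vsupp c.
Hypothesis j_min : forall i, 0 < c' ord0 i * c ord0 i ->
  `|c ord0 j| * `|c' ord0 i| <= `|c ord0 i| * `|c' ord0 j|.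

(* Where c' agrees in sign with c, the choice of j keeps |c_j| |c'_i| below
   |c'_j| |c_i|; elsewhere the two terms of the combination point the same way. *)
Lemma conformal_elim_conformal : conformal conformal_elim c.
Proof.
have c'_0 i : c ord0 i = 0 -> c' ord0 i = 0.
  move=> c_i0; apply/eqP; apply: contraT => c'_i.
  by have := subsetP supp_c' i; rewrite !inE c_i0 eqxx; apply.
move=> i; rewrite conformal_elimE.
by have := @j_min i; have := c'_0 i; move: c'c_j; nia.
Qed.

Lemma vsupp_conformal_elim_proper : vsupp conformal_elim \proper vsupp c.
Proof.
rewrite properE (conformal_vsupp conformal_elim_conformal) /=.
apply/subsetPn; exists j; rewrite inE ?conformal_elim_j ?eqxx //.
by apply: contraTneq c'c_j => ->; rewrite mulr0 ltxx.
Qed.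

End ConformalElimination.

Lemma exists_min_ratio m (c c' : 'rV[int]_m) i0 :
  0 < c' ord0 i0 * c ord0 i0 ->
  exists2 j, 0 < c' ord0 j * c ord0 j & forall i, 0 < c' ord0 i * c ord0 i ->
    `|c ord0 j| * `|c' ord0 i| <= `|c ord0 i| * `|c' ord0 j|.
Proof.
move=> c'c_i0; pose ratio i : rat := `|c ord0 i|%:~R / `|c' ord0 i|%:~R.
case: (arg_minP ratio (P := fun i => 0 < c' ord0 i * c ord0 i) c'c_i0) => j c'c_j j_min.
exists j => // i c'c_i; have := j_min i c'c_i.
have c'_gt0 k : 0 < c' ord0 k * c ord0 k -> 0 < `|c' ord0 k|%:~R :> rat.
  by rewrite ltr0z normr_gt0; apply: contraTneq => ->; rewrite mul0r ltxx.
rewrite /ratio ler_pdivlMr ?c'_gt0 // mulrAC ler_pdivrMr ?c'_gt0 //.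
by rewrite -!intrM ler_int.
Qed.

Lemma kerZ_conformal_reduction m n (A : 'M[int]_(m, n)) c c' :
  kerZ A c -> kerZ A c' -> c' != 0 -> vsupp c' \proper vsupp c ->
  exists2 w, kerZ A w /\ w != 0 & conformal w c /\ vsupp w \proper vsupp c.
Proof.
move=> Ac Ac' c'_neq0 c'c.
wlog [i0 c'c_i0] : c' Ac' c'_neq0 c'c / exists i0, 0 < c' ord0 i0 * c ord0 i0.
  move=> W; have /rV0Pn [i0 c'_i0] := c'_neq0.
  have c_i0 : c ord0 i0 != 0 by have := subsetP (proper_sub c'c) i0; rewrite !inE; apply.
  have [c'c_gt0|c'c_le0] := ltP 0 (c' ord0 i0 * c ord0 i0).
    by apply: (W c') => //; exists i0.
  apply: (W (- c')); rewrite ?vsuppN ?oppr_eq0 //; first exact: kerZN.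
  by exists i0; rewrite mxE mulNr oppr_gt0 lt_neqAle c'c_le0 mulf_neq0.
have [j c'c_j j_min] := exists_min_ratio c'c_i0.
exists (conformal_elim c c' j).
  by split; [apply: kerZ_lincomb Ac Ac' | exact: conformal_elim_neq0 c'c_j c'c].
have c'_sub := proper_sub c'c.
by split; [apply: conformal_elim_conformal | apply: vsupp_conformal_elim_proper].
Qed.

Lemma exists_conformal_minimal_support m n (A : 'M[int]_(m, n)) v :
  kerZ A v -> v != 0 ->
  exists2 c, [/\ kerZ A c, c != 0 & conformal c v] &
    forall c', kerZ A c' -> c' != 0 -> ~ vsupp c' \proper vsupp c.
Proof.
move=> Av v_neq0.
have [|||c [[Ac c_neq0 cv] _] cmin] := @exists_minimal_below _
  (fun c => [/\ kerZ A c, c != 0 & conformal c v])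
  (fun w c => conformal w c /\ vsupp w \proper vsupp c) (fun c => #|vsupp c|) v.
- by move=> a b d [ab /proper_trans ab'] [bd /ab' ad]; split=> //; apply: conformal_trans bd.
- by move=> a b [_ /proper_card].
- by split=> //; apply: conformal_refl.
exists c => // c' Ac' c'_neq0 c'c.
have [w [Aw w_neq0] [wc wc_proper]] := kerZ_conformal_reduction Ac Ac' c'_neq0 c'c.
by apply: (cmin w); split=> //; apply: conformal_trans cv.
Qed.

Lemma exists_primitive_part m (c : 'rV[int]_m) : c != 0 ->
  exists2 g : int, 0 < g & exists2 c1, c = g *: c1 &
    forall d : int, (forall i, (d %| c1 ord0 i)%Z) -> `|d| = 1.
Proof.
move=> c_neq0; pose g := \big[gcdn/0%N]_(i < m) `|c ord0 i|%N.
have g_dvd i : (g %| `|c ord0 i|)%N by apply: (biggcdn_inf i).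
have g_gt0 : (0 < g)%N.
  rewrite lt0n; apply: contra c_neq0 => /eqP g0; apply/eqP/rowP => i.
  by have := g_dvd i; rewrite g0 dvd0n absz_eq0 mxE => /eqP.
pose c1 := \row_i (c ord0 i %/ g%:Z)%Z.
have cE i : c ord0 i = c1 ord0 i * g%:Z by rewrite mxE divzK // dvdzE.
exists g%:Z; first by rewrite ltz_nat.
exists c1; first by apply/rowP => i; rewrite mxE cE mulrC.
move=> d d_dvd; have dg_dvd i : (`|d| * g %| `|c ord0 i|)%N.
  by have := dvdz_mul (d_dvd i) (dvdzz g%:Z); rewrite -cE dvdzE abszM.
have : (`|d| * g %| 1 * g)%N by rewrite mul1n; apply/dvdn_biggcdP => i _; apply: dg_dvd.
by rewrite dvdn_pmul2r // dvdn1 -abszE => /eqP ->.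
Qed.

Lemma exists_conformal_circuit m n (A : 'M[int]_(m, n)) v :
  kerZ A v -> v != 0 -> exists2 c, circuit A c & conformal c v.
Proof.
move=> Av v_neq0.
have [c [Ac c_neq0 cv] cmin] := exists_conformal_minimal_support Av v_neq0.
have [g g_gt0 [c1 cE c1_prim]] := exists_primitive_part c_neq0.
have g_neq0 : g != 0 by rewrite gt_eqF.
exists c1; last by apply: conformal_trans cv; rewrite cE; apply: conformalZr.
split=> //; first by apply: kerZZ g_neq0 _; rewrite -cE.
  by apply: contraNneq c_neq0 => c10; rewrite cE c10 scaler0.
move=> w Aw w_neq0 wc1; apply/eqP; rewrite eqEsubset wc1 /=; apply/negPn/negP => ne.
by apply: (cmin w Aw w_neq0); rewrite cE vsuppZ // properE wc1.
Qed.

Lemma Tmin_upos_supp_not_proper (K : fieldType) m n (L : 'rV[int]_m -> Prop)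
    (A : 'M[int]_(m, n)) E u :
  is_lattice L -> (forall u, Sat L u <-> kerZ A u) -> @Tmin K m L E ->
  kerZ A u -> u != 0 -> ~ mnmsupp (upos u) \proper E.
Proof.
move=> L_lattice SatL [_ Emin] Au u_neq0 uE.
have [k k_gt0 Lku] := Sat_pos_multiple L_lattice ((SatL u).2 Au).
have ku_neq0 : k *: u != 0 by rewrite scalemx_eq0 negb_or gt_eqF.
have [v vmin vku] := exists_minimal_upos Lku ku_neq0.
have vu : mnmsupp (upos v) \subset mnmsupp (upos u).
  exact: subset_trans (mnmsupp_lem vku) (conformal_mnmsupp_upos (conformalZl _ k_gt0)).
have v_indisp : indisp_supports K L (mnmsupp (upos v)).
  by exists (upos v); split=> //; apply: minimal_upos_indispensable.
have vE := Emin _ v_indisp (subset_trans vu (proper_sub uE)).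
by move: uE; rewrite properE -vE vu andbF.
Qed.

Theorem lemma2p5 (K : fieldType) (m n : nat) (L : 'rV[int]_m -> Prop)
  (A : 'M[int]_(m, n)) (E : {set 'I_m}) :
  is_lattice L ->
  (exists u, L u /\ u != 0) ->
  (forall u, L u -> (forall i, 0 <= u ord0 i) -> u = 0) ->
  (forall u, Sat L u <-> kerZ A u) ->
  @Tmin K m L E ->
  (~ exists u, circuit A u /\
       (mnmsupp (upos u) \proper E \/ mnmsupp (uneg u) \proper E)) /\
  (exists u, circuit A u /\ (mnmsupp (upos u) = E \/ mnmsupp (uneg u) = E)).
Proof.
move=> L_lattice _ _ SatL TminE.
have not_proper := Tmin_upos_supp_not_proper L_lattice SatL TminE.
split.
  case=> u [[Au u_neq0 _ _] [uE|uE]]; first exact: not_proper Au u_neq0 uE.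
  by apply: (not_proper _ (kerZN Au)); rewrite ?oppr_eq0 ?uposN.
have [[w [w_indisp wE]] _] := TminE.
have [v [Lv v_neq0] vw] := indispensable_upos L_lattice w_indisp.
have Av : kerZ A v by apply/SatL; exists 1; rewrite scale1r.
have [c c_circuit cv] := exists_conformal_circuit Av v_neq0.
exists c; split=> //; left; case: c_circuit => Ac c_neq0 _ _.
have cE : mnmsupp (upos c) \subset E by rewrite -wE -vw conformal_mnmsupp_upos.
by apply/eqP; rewrite eqEproper cE /=; apply/negP/not_proper.
Qed.
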